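(* Let $H$ be a separable complex Hilbert space and $U:H\to H$ a unitary operator. Then $U$ is recurrent if and only if $U$ is rigid.
   Context: $U$ is recurrent if for every non-empty open $V\subset H$ there is a positive integer $k$ with $V\cap U^{-k}(V)\neq\emptyset$; $U$ is rigid if there is an increasing sequence of positive integers $(k_n)$ with $U^{k_n}x\to x$ for every $x\in H$. *)

From mathcomp Require Import all_boot all_algebra.
From mathcomp Require Import complex.
From mathcomp Require Import reals.
Set Implicit Arguments. Unset Strict Implicit. Unset Printing Implicit Defensive.
Import GRing.Theory Num.Theory.
Local Open Scope ring_scope.
Local Open Scope complex_scope.

Section Hilbert.
Variable R : realType.
Variable V : lmodType R[i].

(* A complex inner product: linear in the first argument, conjugate
   symmetric, positive definite (0 <= z in R[i] means z real and >= 0). *)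
Definition inner_product (ip : V -> V -> R[i]) : Prop :=
  [/\ forall (a : R[i]) (x y z : V), ip (a *: x + y) z = a * ip x z + ip y z,
      forall x y : V, ip y x = (ip x y)^*,
      forall x : V, 0 <= ip x x
    & forall x : V, ip x x = 0 -> x = 0].

Variable ip : V -> V -> R[i].

Definition hnorm (x : V) : R := Num.sqrt (complex.Re (ip x x)).
Definition hdist (x y : V) : R := hnorm (x - y).

Definition hconverges (u : nat -> V) (l : V) : Prop :=
  forall e : R, 0 < e -> exists N : nat, forall n, (N <= n)%N -> hdist (u n) l < e.

Definition hcauchy (u : nat -> V) : Prop :=
  forall e : R, 0 < e -> exists N : nat,
    forall m n, (N <= m)%N -> (N <= n)%N -> hdist (u m) (u n) < e.

Definition hcomplete : Prop :=
  forall u : nat -> V, hcauchy u -> exists l, hconverges u l.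

Definition hseparable : Prop :=
  exists d : nat -> V, forall (x : V) (e : R), 0 < e -> exists n, hdist x (d n) < e.

Definition hilbert_space : Prop := inner_product ip /\ hcomplete.

Definition hopen (S : V -> Prop) : Prop :=
  forall x, S x -> exists2 e : R, 0 < e & forall y, hdist x y < e -> S y.

Definition unitary (U : V -> V) : Prop :=
  [/\ forall (a : R[i]) (x y : V), U (a *: x + y) = a *: U x + U y,
      forall y : V, exists x, U x = y
    & forall x y : V, ip (U x) (U y) = ip x y].

Definition recurrent (U : V -> V) : Prop :=
  forall W : V -> Prop, hopen W -> (exists x, W x) ->
    exists k : nat, (0 < k)%N /\ exists x, W x /\ W (iter k U x).

Definition rigid (U : V -> V) : Prop :=
  exists k : nat -> nat,
    [/\ forall n, (0 < k n)%N, forall n, (k n < k n.+1)%N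
      & forall x : V, hconverges (fun n => iter (k n) U x) x].

End Hilbert.

(* Rigidity gives recurrence at once: a point of an open set returns into it.
   Conversely, recurrence makes a single vector return arbitrarily late, and the
   point is that one vector can control finitely many.  Given x and y, write
   y = s + y' with s in the algebraic cyclic subspace of x and y' almost orthogonal
   to it (a greedy Gram-Schmidt argument, no completeness needed).  Returns of x
   control those of s, and for z = l x + y' with l large the cross term in
   |U^k z - z|^2 is negligible, so a small return of z forces small returns of x,
   of y' and hence of y.  Applying this to the first n vectors of a dense sequence
   yields increasing times k_n at which they all move by less than 1/(n+1); as
   the U^k are isometries, U^(k_n) x -> x follows for every x. *)

From mathcomp Require Import all_boot all_order all_algebra.
From mathcomp Require Import complex.
From mathcomp Require Import reals.
From mathcomp Require Import ring lra.
From Stdlib Require Import Classical ClassicalEpsilon.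
Set Implicit Arguments. Unset Strict Implicit. Unset Printing Implicit Defensive.

Import Order.TTheory GRing.Theory Num.Theory.
Local Open Scope ring_scope.
Local Open Scope complex_scope.
Local Notation Re := complex.Re.
Local Notation Im := complex.Im.

Section ComplexParts.
Variable R : realType.
Implicit Types (x y : R[i]) (r : R).

Lemma ReD x y : Re (x + y) = Re x + Re y. Proof. by case: x => a b; case: y => c d. Qed.
Lemma ReN x : Re (- x) = - Re x. Proof. by case: x. Qed.
Lemma ReM x y : Re (x * y) = Re x * Re y - Im x * Im y.
Proof. by case: x => a b; case: y => c d. Qed.
Lemma ReJ x : Re x^* = Re x. Proof. by case: x. Qed.

Definition sqrnormc x : R := Re x ^+ 2 + Im x ^+ 2.

Lemma sqrnormc_ge0 x : 0 <= sqrnormc x.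
Proof. by rewrite addr_ge0 ?sqr_ge0. Qed.

Lemma sqrnormc0 : sqrnormc 0 = 0.
Proof. by rewrite /sqrnormc expr0n addr0. Qed.

Lemma sqrnormcR r : sqrnormc r%:C = r ^+ 2.
Proof. by rewrite /sqrnormc expr0n addr0. Qed.

Lemma sqrRe_le_sqrnormc x : Re x ^+ 2 <= sqrnormc x.
Proof. by rewrite lerDl sqr_ge0. Qed.

Lemma Re_mulJ x : Re (x * x^*) = sqrnormc x.
Proof. by case: x => a b; rewrite /sqrnormc /=; ring. Qed.

End ComplexParts.

Section InnerProduct.
Variables (R : realType) (V : lmodType R[i]) (ip : V -> V -> R[i]).
Hypothesis hip : inner_product ip.
Implicit Types (x y z u v : V) (a : R[i]).

Lemma ipDl x y z : ip (x + y) z = ip x z + ip y z.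
Proof. by case: hip => linl _ _ _; rewrite -(scale1r x) linl mul1r scale1r. Qed.

Lemma ip0l z : ip 0 z = 0.
Proof. by apply: (addrI (ip 0 z)); rewrite -ipDl !addr0. Qed.

Lemma ipZl a x z : ip (a *: x) z = a * ip x z.
Proof. by case: hip => linl _ _ _; rewrite -(addr0 (a *: x)) linl ip0l addr0. Qed.

Lemma ipNl x z : ip (- x) z = - ip x z.
Proof. by rewrite -scaleN1r ipZl mulN1r. Qed.

Lemma ipC x y : ip y x = (ip x y)^*.
Proof. by case: hip. Qed.

Lemma ipZr a x z : ip z (a *: x) = a^* * ip z x.
Proof. by rewrite ipC ipZl rmorphM /= -ipC. Qed.

Lemma ipDr x y z : ip z (x + y) = ip z x + ip z y.
Proof. by rewrite ipC ipDl rmorphD /= -!ipC. Qed.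

Lemma ipNr x z : ip z (- x) = - ip z x.
Proof. by rewrite ipC ipNl rmorphN /= -ipC. Qed.

Lemma ipBr x y z : ip z (x - y) = ip z x - ip z y.
Proof. by rewrite ipDr ipNr. Qed.

Lemma ip0r z : ip z 0 = 0.
Proof. by rewrite ipC ip0l conjc0. Qed.

Definition sqrnorm v : R := Re (ip v v).

Lemma ip_self v : ip v v = (sqrnorm v)%:C.
Proof.
case: hip => _ _ ge0 _; have := ge0 v; rewrite lecE /sqrnorm.
by case: (ip v v) => a b /= /andP[/eqP -> _].
Qed.

Lemma sqrnorm_ge0 v : 0 <= sqrnorm v.
Proof. by case: hip => _ _ ge0 _; have := ge0 v; rewrite ip_self lecR. Qed.

Lemma sqrnorm_eq0 v : sqrnorm v = 0 -> v = 0.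
Proof. by case: hip => _ _ _ def v0; apply: def; rewrite ip_self v0. Qed.

Lemma sqrnorm0 : sqrnorm 0 = 0.
Proof. by rewrite /sqrnorm ip0l. Qed.

Lemma sqrnormD u v : sqrnorm (u + v) = sqrnorm u + sqrnorm v + 2 * Re (ip u v).
Proof. by rewrite /sqrnorm ipDl !ipDr !ReD (ipC u v) ReJ; lra. Qed.

Lemma sqrnormZ a v : sqrnorm (a *: v) = sqrnormc a * sqrnorm v.
Proof. by rewrite /sqrnorm ipZl ipZr ip_self mulrA ReM Re_mulJ /= mulr0 subr0. Qed.

Lemma sqrnormN v : sqrnorm (- v) = sqrnorm v.
Proof. by rewrite -scaleN1r sqrnormZ /sqrnormc /=; ring. Qed.

Lemma sqrnormB u v : sqrnorm (u - v) = sqrnorm u + sqrnorm v - 2 * Re (ip u v).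
Proof. by rewrite sqrnormD sqrnormN ipNr ReN; lra. Qed.

Lemma sqrnormD_le u v : sqrnorm (u + v) <= 2 * sqrnorm u + 2 * sqrnorm v.
Proof. by have := sqrnorm_ge0 (u - v); rewrite sqrnormB sqrnormD; lra. Qed.

Lemma Re_ip_sqr_le u v : Re (ip u v) ^+ 2 <= sqrnorm u * sqrnorm v.
Proof.
have [u0|nu0] := eqVneq (sqrnorm u) 0.
  by rewrite (sqrnorm_eq0 u0) ip0l sqrnorm0 mul0r expr0n.
have nu_gt0 : 0 < sqrnorm u by rewrite lt0r nu0 sqrnorm_ge0.
set r := Re (ip u v); pose t := - (r / sqrnorm u).
have := sqrnorm_ge0 (t%:C *: u + v).
rewrite sqrnormD sqrnormZ sqrnormcR ipZl ReM /= mul0r subr0 -/r.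
have -> : t ^+ 2 * sqrnorm u + sqrnorm v + 2 * (t * r)
    = (sqrnorm u * sqrnorm v - r ^+ 2) / sqrnorm u by rewrite /t; field.
by rewrite pmulr_lge0 ?invr_gt0 // subr_ge0.
Qed.

Lemma sqrnorm_sub_proj w u : sqrnorm u != 0 ->
  sqrnorm (w - (ip w u / (sqrnorm u)%:C) *: u)
    = sqrnorm w - sqrnormc (ip w u) / sqrnorm u.
Proof.
move=> nu0; rewrite sqrnormB sqrnormZ ipZr -fmorphV.
by case: (ip w u) => a b; rewrite /sqrnormc /=; field.
Qed.

Lemma hnorm_ge0 v : 0 <= hnorm ip v.
Proof. exact: sqrtr_ge0. Qed.

Lemma sqr_hnorm v : hnorm ip v ^+ 2 = sqrnorm v.
Proof. by rewrite sqr_sqrtr // sqrnorm_ge0. Qed.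

Lemma hnorm_lt v (e : R) : 0 < e -> (hnorm ip v < e) = (sqrnorm v < e ^+ 2).
Proof.
move=> e_gt0; rewrite -[in LHS](gtr0_norm e_gt0) -sqrtr_sqr.
by rewrite ltr_sqrt // exprn_gt0.
Qed.

Lemma hnormD u v : hnorm ip (u + v) <= hnorm ip u + hnorm ip v.
Proof.
have nu := hnorm_ge0 u; have nv := hnorm_ge0 v.
have Re_le : Re (ip u v) <= hnorm ip u * hnorm ip v.
  have := Re_ip_sqr_le u v; rewrite -!sqr_hnorm -exprMn => le_sqr.
  have := mulr_ge0 nu nv; nra.
rewrite -(ler_pXn2r (_ : 0 < 2)%N) ?nnegrE ?addr_ge0 ?hnorm_ge0 //.
by rewrite sqr_hnorm sqrnormD -!sqr_hnorm; nra.
Qed.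

Lemma hdist_triangle x y z : hdist ip x z <= hdist ip x y + hdist ip y z.
Proof. by rewrite /hdist -(subrKA y) hnormD. Qed.

Lemma hdistC x y : hdist ip x y = hdist ip y x.
Proof. by rewrite /hdist -opprB /hnorm; congr Num.sqrt; exact: sqrnormN. Qed.

Lemma hdistxx x : hdist ip x x = 0.
Proof. by rewrite /hdist subrr /hnorm ip0l sqrtr0. Qed.

Lemma near_orthogonal_decomposition (L : V -> Prop) y (eta : R) :
  L 0 -> (forall s u (t : R[i]), L s -> L u -> L (s + t *: u)) -> 0 < eta ->
  exists2 s, L s & forall u, L u -> sqrnormc (ip (y - s) u) <= eta * sqrnorm u.
Proof.
move=> L0 L_lin eta_gt0; apply: NNPP => no_s.
have improve s : L s -> exists2 s', L s' & sqrnorm (y - s') <= sqrnorm (y - s) - eta.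
  move=> Ls; apply: NNPP => no_s'; apply: no_s; exists s => // u Lu.
  rewrite leNgt; apply/negP => big; apply: no_s'.
  have nu0 : sqrnorm u != 0.
    by apply: contraTneq big => /sqrnorm_eq0 ->; rewrite ip0r sqrnormc0 sqrnorm0 mulr0 ltxx.
  have nu_gt0 : 0 < sqrnorm u by rewrite lt0r nu0 sqrnorm_ge0.
  exists (s + (ip (y - s) u / (sqrnorm u)%:C) *: u); first exact: L_lin.
  rewrite opprD addrA sqrnorm_sub_proj // lerD2l lerN2 ler_pdivlMr //.
  exact: ltW.
have descent n : exists2 s, L s & sqrnorm (y - s) <= sqrnorm y - n%:R * eta.
  elim: n => [|n [s Ls le_s]]; first by exists 0; rewrite ?subr0 ?mul0r ?subr0.
  have [s' Ls' le_s'] := improve s Ls; exists s' => //.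
  by rewrite -natr1 mulrDl mul1r opprD addrA; apply: (le_trans le_s'); rewrite lerD2r.
pose N := Num.Def.archi_bound (sqrnorm y / eta).
have := archi_boundP (divr_ge0 (sqrnorm_ge0 y) (ltW eta_gt0)).
rewrite -/N ltr_pdivrMr // => big_N.
have [s _ le_s] := descent N.
by have := sqrnorm_ge0 (y - s); lra.
Qed.

End InnerProduct.

Section Unitary.
Variables (R : realType) (V : lmodType R[i]) (ip : V -> V -> R[i]).
Variable W : V -> V.
Hypothesis hW : unitary ip W.
Implicit Types (x y : V) (a : R[i]).

Lemma unitaryD x y : W (x + y) = W x + W y.
Proof. by case: hW => lin _ _; rewrite -(scale1r x) lin !scale1r. Qed.

Lemma unitary0 : W 0 = 0.
Proof. by apply: (addrI (W 0)); rewrite -unitaryD !addr0. Qed.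

Lemma unitaryZ a x : W (a *: x) = a *: W x.
Proof. by case: hW => lin _ _; rewrite -(addr0 (a *: x)) lin unitary0 addr0. Qed.

Lemma unitaryB x y : W (x - y) = W x - W y.
Proof. by rewrite unitaryD -scaleN1r unitaryZ scaleN1r. Qed.

Lemma ip_unitary x y : ip (W x) (W y) = ip x y.
Proof. by case: hW. Qed.

Lemma sqrnorm_unitary x : sqrnorm ip (W x) = sqrnorm ip x.
Proof. by rewrite /sqrnorm ip_unitary. Qed.

Lemma hdist_unitary x y : hdist ip (W x) (W y) = hdist ip x y.
Proof. by rewrite /hdist -unitaryB /hnorm -/(sqrnorm ip _) sqrnorm_unitary. Qed.

End Unitary.

Lemma unitary_iter (R : realType) (V : lmodType R[i]) (ip : V -> V -> R[i])
    (U : V -> V) k : unitary ip U -> unitary ip (iter k U).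
Proof.
move=> hU; elim: k => [|k [lin surj isom]]; first by split=> // y; exists y.
split=> [a x y | y | x y] /=.
- by rewrite lin (unitaryD hU) (unitaryZ hU).
- by case: hU => _ surjU _; have [z <-] := surjU y; have [x <-] := surj z; exists x.
- by rewrite (ip_unitary hU).
Qed.

Section CyclicSubspace.
Variables (R : realType) (V : lmodType R[i]) (ip : V -> V -> R[i]).
Hypothesis hip : inner_product ip.
Variable U : V -> V.
Hypothesis hU : unitary ip U.
Implicit Types (x s u v : V).

Let iterU k : unitary ip (iter k U) := unitary_iter k hU.

Lemma iterC k n v : iter k U (iter n U v) = iter n U (iter k U v).
Proof. by rewrite -!iterD addnC. Qed.

Inductive orbit_span x : V -> Prop :=
| orbit_span0 : orbit_span x 0
| orbit_spanS (a : R[i]) n v : orbit_span x v -> orbit_span x (a *: iter n U x + v).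

Lemma orbit_span_orbit x n : orbit_span x (iter n U x).
Proof. by rewrite -[X in orbit_span _ X]addr0 -[X in X + _]scale1r; do 2!constructor. Qed.

Lemma orbit_spanD x u v : orbit_span x u -> orbit_span x v -> orbit_span x (u + v).
Proof. by elim=> [|a n w _ IH] Sv; rewrite ?add0r // -addrA; constructor; apply: IH. Qed.

Lemma orbit_spanZ x (a : R[i]) v : orbit_span x v -> orbit_span x (a *: v).
Proof.
elim=> [|b n w _ IH]; first by rewrite scaler0; constructor.
by rewrite scalerDr scalerA; constructor.
Qed.

Lemma orbit_span_iter x k v : orbit_span x v -> orbit_span x (iter k U v).
Proof.
elim=> [|a n w _ IH]; first by rewrite (unitary0 (iterU k)); constructor.
by rewrite (unitaryD (iterU k)) (unitaryZ (iterU k)) -iterD; constructor.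
Qed.

(* The span of all [U^n x], [n] in Z.  Only surjectivity of [U] is known, so a
   vector [v] is in it when some forward image [U^N v] is in the span of the
   forward orbit of [x]. *)
Definition cyclic_subspace x v := exists N, orbit_span x (iter N U v).

Lemma cyclic_subspace0 x : cyclic_subspace x 0.
Proof. by exists 0%N; constructor. Qed.

Lemma cyclic_subspace_orbit x n : cyclic_subspace x (iter n U x).
Proof. by exists 0%N; apply: orbit_span_orbit. Qed.

Lemma cyclic_subspace_lin x s u (t : R[i]) :
  cyclic_subspace x s -> cyclic_subspace x u -> cyclic_subspace x (s + t *: u).
Proof.
move=> [N Ss] [M Su]; exists (N + M)%N.
rewrite (unitaryD (iterU _)) (unitaryZ (iterU _)); apply: orbit_spanD.
  by rewrite addnC iterD; apply: orbit_span_iter.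
by rewrite iterD; apply/orbit_spanZ/orbit_span_iter.
Qed.

Lemma cyclic_subspace_iterV x k v :
  cyclic_subspace x (iter k U v) -> cyclic_subspace x v.
Proof. by move=> [N SN]; exists (N + k)%N; rewrite iterD. Qed.

Lemma orbit_span_displacement x v : orbit_span x v -> exists2 C, 0 <= C &
  forall k, sqrnorm ip (iter k U v - v) <= C * sqrnorm ip (iter k U x - x).
Proof.
elim=> [|a n w _ [C C_ge0 le_C]].
  by exists 0 => // k; rewrite (unitary0 (iterU k)) subrr sqrnorm0 ?mul0r.
exists (2 * sqrnormc a + 2 * C) => [|k].
  by rewrite addr_ge0 ?mulr_ge0 ?sqrnormc_ge0.
rewrite (unitaryD (iterU k)) (unitaryZ (iterU k)) iterC opprD addrACA.
rewrite -scalerBr -(unitaryB (iterU n)).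
apply: (le_trans (sqrnormD_le hip _ _)).
rewrite (sqrnormZ hip) (sqrnorm_unitary (iterU n)).
have := le_C k; have := sqrnormc_ge0 a; have := sqrnorm_ge0 hip (iter k U x - x).
nra.
Qed.

Lemma cyclic_subspace_displacement x s : cyclic_subspace x s -> exists2 C, 0 <= C &
  forall k, sqrnorm ip (iter k U s - s) <= C * sqrnorm ip (iter k U x - x).
Proof.
move=> [N /orbit_span_displacement [C C_ge0 le_C]]; exists C => // k.
by rewrite -(sqrnorm_unitary (iterU N)) (unitaryB (iterU N)) iterC.
Qed.

End CyclicSubspace.

Lemma twice_mul_le_young (R : realFieldType) (l a r eta : R) : 0 <= a -> 0 <= eta ->
  r ^+ 2 <= eta * a -> 2 * l * r <= l ^+ 2 * a / 4 + 4 * eta.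
Proof.
rewrite le0r => /orP[/eqP-> eta_ge0|a_gt0 eta_ge0 r_le].
  by rewrite mulr0 => r_le; nra.
rewrite -subr_ge0 -(pmulr_rge0 _ a_gt0).
by have := sqr_ge0 (l * a / 2 - 2 * r); nra.
Qed.

Section CommonReturns.
Variables (R : realType) (V : lmodType R[i]) (ip : V -> V -> R[i]).
Hypothesis hip : inner_product ip.
Variable U : V -> V.
Hypothesis hU : unitary ip U.
Implicit Types (x y z : V).

Let iterU k : unitary ip (iter k U) := unitary_iter k hU.
Local Notation sqrnorm := (sqrnorm ip).
Local Notation cyclic_subspace := (cyclic_subspace U).

Lemma sqrnorm_displacement_ge x y k (l eta : R) : 0 <= eta ->
  (forall u, cyclic_subspace x u -> sqrnormc (ip y u) <= eta * sqrnorm u) ->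
  l ^+ 2 * sqrnorm (iter k U x - x) / 2 + sqrnorm (iter k U y - y) - 8 * eta
    <= sqrnorm (iter k U (l%:C *: x + y) - (l%:C *: x + y)).
Proof.
move=> eta_ge0 y_orth.
set A := iter k U x - x; set B := iter k U y - y; set a := sqrnorm A.
have Re_le u : cyclic_subspace x u -> Re (ip u y) ^+ 2 <= eta * sqrnorm u.
  move=> Lu; apply: le_trans (y_orth u Lu).
  by rewrite (ipC hip) ReJ sqrRe_le_sqrnormc.
have LA : cyclic_subspace x A.
  rewrite /A -scaleN1r -[X in _ + _ *: X]/(iter 0 U x).
  by apply: (cyclic_subspace_lin hU); apply: cyclic_subspace_orbit.
have [x' x'A] : exists x', iter k U x' = A by case: (iterU k).
have Lx' : cyclic_subspace x x' by apply: (cyclic_subspace_iterV (k := k)); rewrite x'A.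
have a_x' : sqrnorm x' = a by rewrite -(sqrnorm_unitary (iterU k)) x'A.
(* Both terms of the cross term are small since [y] is almost orthogonal to
   [A] and to its preimage [x']. *)
have ReAB : Re (ip A B) = Re (ip x' y) - Re (ip A y).
  by rewrite /B (ipBr hip) -{1}x'A (ip_unitary (iterU k)) ReD ReN.
have -> : iter k U (l%:C *: x + y) - (l%:C *: x + y) = l%:C *: A + B.
  by rewrite (unitaryD (iterU k)) (unitaryZ (iterU k)) opprD addrACA -scalerBr.
rewrite [sqrnorm (_ + B)](sqrnormD hip) (sqrnormZ hip) sqrnormcR (ipZl hip) ReM /=.
rewrite mul0r subr0 ReAB -/a.
have y1 := twice_mul_le_young (- l) (sqrnorm_ge0 hip _) eta_ge0 (Re_le _ Lx').
have y2 := twice_mul_le_young l (sqrnorm_ge0 hip _) eta_ge0 (Re_le _ LA).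
rewrite a_x' sqrrN in y1; rewrite -/a in y2.
nra.
Qed.

Lemma common_return_vector2 x y (eps : R) : 0 < eps -> exists z (del : R), 0 < del /\
  forall k, hdist ip (iter k U z) z < del ->
    hdist ip (iter k U x) x < eps /\ hdist ip (iter k U y) y < eps.
Proof.
move=> eps_gt0; pose del := eps / 10; pose eta := del ^+ 2.
have del_gt0 : 0 < del by rewrite divr_gt0.
have eta_gt0 : 0 < eta by rewrite exprn_gt0.
have eps2 : eps ^+ 2 = 100 * eta by rewrite /eta /del; field.
have [s Ls s_orth] := near_orthogonal_decomposition hip y (cyclic_subspace0 U x)
  (cyclic_subspace_lin hU (x := x)) eta_gt0.
have [C C_ge0 le_C] := cyclic_subspace_displacement hip hU Ls.
(* As [l ^+ 2] dominates [1] and [C], a return of [z] within [del] bounds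
   [l ^+ 2 * a / 2 + b] by [9 * eta], hence [a] and [C * a + b]. *)
pose l := 1 + C.
exists (l%:C *: x + (y - s)), del; split=> // k.
have split_y : iter k U y - y = (iter k U s - s) + (iter k U (y - s) - (y - s)).
  by rewrite (unitaryB (iterU k)) addrACA [iter k U s + _]addrC subrK -opprD [s + _]addrC subrK.
rewrite /hdist !hnorm_lt // eps2 -/eta => small_z.
have := sqrnorm_displacement_ge k l (ltW eta_gt0) s_orth.
have := sqrnormD_le hip (iter k U s - s) (iter k U (y - s) - (y - s)); rewrite -split_y.
have := le_C k; have := sqrnorm_ge0 hip (iter k U (y - s) - (y - s)).
set a := sqrnorm (iter k U x - x); set b := sqrnorm (iter k U (y - s) - (y - s)).
have a_ge0 : 0 <= a := sqrnorm_ge0 hip _.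
have l_ge1 : 1 <= l ^+ 2 by rewrite /l; nra.
have C_le : C <= l ^+ 2 by rewrite /l; nra.
have a_le : a <= l ^+ 2 * a by rewrite ler_peMl.
have Ca_le : C * a <= l ^+ 2 * a by rewrite ler_wpM2r.
split; lra.
Qed.

Lemma common_return_vector (d : nat -> V) n (eps : R) : 0 < eps ->
  exists z (del : R), 0 < del /\ forall k, hdist ip (iter k U z) z < del ->
    forall i, (i <= n)%N -> hdist ip (iter k U (d i)) (d i) < eps.
Proof.
move=> eps_gt0; elim: n => [|n [z' [del' [del'_gt0 ret_z']]]].
  by exists (d 0%N), eps; split=> // k ret i; rewrite leqn0 => /eqP->.
have [|z [del [del_gt0 ret_z]]] := common_return_vector2 z' (d n.+1) (_ : 0 < Num.min eps del').
  by rewrite lt_min eps_gt0.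
exists z, del; split=> // k /ret_z[]; rewrite !lt_min => /andP[_ /ret_z' ret] /andP[ret_n _] i.
by rewrite leq_eqVlt ltnS => /orP[/eqP->|/ret].
Qed.

Lemma hdist_iter_mul_le j k x :
  hdist ip (iter (j * k) U x) x <= j%:R * hdist ip (iter k U x) x.
Proof.
elim: j => [|j IH]; first by rewrite mul0n mul0r hdistxx.
rewrite mulSn iterD -natr1 mulrDl mul1r.
apply: le_trans (hdist_triangle hip _ (iter k U x) _) _.
by rewrite (hdist_unitary (iterU k)) lerD2r.
Qed.

Lemma recurrent_return x (e : R) : recurrent ip U -> 0 < e ->
  exists2 k, (0 < k)%N & hdist ip (iter k U x) x < e.
Proof.
move=> rec e_gt0; have e2_gt0 : 0 < e / 2 by rewrite divr_gt0.
have ball_open : hopen ip (fun y => hdist ip x y < e / 2).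
  move=> y xy; exists (e / 2 - hdist ip x y) => [|w yw]; first by rewrite subr_gt0.
  by apply: le_lt_trans (hdist_triangle hip x y w) _; rewrite -ltrBrDl.
have [|k [k_gt0 [y [xy xky]]]] := rec _ ball_open.
  by exists x; rewrite hdistxx.
exists k => //; apply: le_lt_trans (hdist_triangle hip _ (iter k U y) _) _.
by rewrite (hdist_unitary (iterU k)) (hdistC hip _ x) [e]splitr ltrD.
Qed.

Lemma recurrent_late_return x M (e : R) : recurrent ip U -> 0 < e ->
  exists2 k, (M < k)%N & hdist ip (iter k U x) x < e.
Proof.
move=> rec e_gt0; have M1_gt0 : 0 < M.+1%:R :> R by rewrite ltr0n.
have [k k_gt0 ret] := recurrent_return x rec (divr_gt0 e_gt0 M1_gt0).
exists (M.+1 * k)%N; first exact: leq_pmulr.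
apply: le_lt_trans (hdist_iter_mul_le _ _ _) _.
by rewrite mulrC -ltr_pdivlMr.
Qed.

End CommonReturns.

Lemma increasing_choice (P : nat -> nat -> Prop) :
  (forall n m, exists2 k, (m < k)%N & P n k) ->
  exists k : nat -> nat,
    [/\ forall n, (0 < k n)%N, forall n, (k n < k n.+1)%N & forall n, P n (k n)].
Proof.
move=> ex_k.
have next n m : {k | (m < k)%N /\ P n k}.
  by apply: constructive_indefinite_description; have [k] := ex_k n m; exists k.
pose k := fix k n := if n is n'.+1 then sval (next n (k n')) else sval (next 0%N 0%N).
have k_spec n : ((if n is n'.+1 then k n' else 0) < k n)%N /\ P n (k n).
  by case: n => [|n]; [exact: svalP (next 0%N 0%N) | exact: svalP (next n.+1 (k n))].
exists k; split=> [n|n|n]; last exact: (k_spec n).2.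
- by elim: n => [|n IH]; [exact: (k_spec 0%N).1 | exact: ltn_trans IH (k_spec n.+1).1].
- exact: (k_spec n.+1).1.
Qed.

Lemma exists_inv_succ_lt (R : archiRealFieldType) (e : R) : 0 < e ->
  exists N : nat, (N.+1%:R)^-1 < e.
Proof.
move=> e_gt0; exists (Num.Def.archi_bound e^-1).
rewrite -[e in _ < e]invrK ltf_pV2 ?posrE ?invr_gt0 ?ltr0n //.
by apply: lt_trans (archi_boundP _) _; rewrite ?invr_ge0 ?ltW // ltr_nat.
Qed.

Lemma hconverges_of_dense (R : realType) (V : lmodType R[i]) (ip : V -> V -> R[i])
    (W : nat -> V -> V) (d : nat -> V) : inner_product ip ->
  (forall n x y, hdist ip (W n x) (W n y) = hdist ip x y) ->
  (forall x (e : R), 0 < e -> exists i, hdist ip x (d i) < e) ->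
  (forall i, hconverges ip (fun n => W n (d i)) (d i)) ->
  forall x, hconverges ip (fun n => W n x) x.
Proof.
move=> hip isom dense conv_d x e e_gt0.
have e3_gt0 : 0 < e / 3 by rewrite divr_gt0.
have [i near_i] := dense x _ e3_gt0.
have [N conv_N] := conv_d i _ e3_gt0.
exists N => n le_Nn.
have := hdist_triangle hip (W n x) (W n (d i)) x.
have := hdist_triangle hip (W n (d i)) (d i) x.
rewrite isom (hdistC hip (d i)); have := conv_N n le_Nn; lra.
Qed.

Section RecurrentRigid.
Variables (R : realType) (V : lmodType R[i]) (ip : V -> V -> R[i]).
Hypothesis hip : inner_product ip.
Variable U : V -> V.
Hypothesis hU : unitary ip U.

Lemma recurrent_rigid : hseparable ip -> recurrent ip U -> rigid ip U.
Proof.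
move=> [d dense] rec.
pose P n k := forall i, (i <= n)%N -> hdist ip (iter k U (d i)) (d i) < (n.+1%:R)^-1.
have P_late n m : exists2 k, (m < k)%N & P n k.
  have inv_gt0 : 0 < (n.+1%:R : R)^-1 by rewrite invr_gt0 ltr0n.
  have [z [del [del_gt0 ret_z]]] := common_return_vector hip hU d n inv_gt0.
  have [k lt_mk ret] := recurrent_late_return hip hU z m rec del_gt0.
  by exists k => //; apply: ret_z.
have [k [k_gt0 k_incr k_P]] := increasing_choice P_late.
have isom n := hdist_unitary (unitary_iter (k n) hU).
exists k; split=> //; apply: (hconverges_of_dense hip isom dense).
move=> i e e_gt0; have [N N_lt] := exists_inv_succ_lt e_gt0.
exists (maxn i N) => n; rewrite geq_max => /andP[le_in le_Nn].
apply: lt_le_trans (k_P n i le_in) _; apply: le_trans (ltW N_lt).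
by rewrite lef_pV2 ?posrE ?ltr0n // ler_nat.
Qed.

Lemma rigid_recurrent : rigid ip U -> recurrent ip U.
Proof.
move=> [k [k_gt0 _ conv]] W W_open [x Wx].
have [e e_gt0 ball_W] := W_open x Wx; have [N conv_N] := conv x e e_gt0.
exists (k N); split=> //; exists x; split=> //.
by apply: ball_W; rewrite (hdistC hip); apply: conv_N.
Qed.

End RecurrentRigid.

Theorem proposition9p3 (R : realType) (V : lmodType R[i]) (ip : V -> V -> R[i])
    (hH : hilbert_space ip) (hsep : hseparable ip)
    (U : V -> V) (hU : unitary ip U) :
  recurrent ip U <-> rigid ip U.
Proof.
case: hH => hip _; split; first exact: recurrent_rigid.
exact: rigid_recurrent.
Qed.
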